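(* Let $P(k)=C_pT_p^k-C_mT_m^k$ with $C_p,C_m>0$, $T_p,T_m\in(0,1)$, $T_p\neq T_m$. For each integer $j\ge 0$ the $j$-th derivative $P^{(j)}$ has a unique zero $k^{(j)}$ (the $j$-th characteristic point), and $k^{(0)}<k^{(1)}<k^{(2)}<\dots$, i.e. the abscissa intersection point, the extremum, the inflection point and then the zeros of higher derivatives are located from left to right in this order. *)

From Stdlib Require Import Reals.
From Coquelicot Require Import Coquelicot.
Open Scope R_scope.

Definition Pfun (Cp Cm Tp Tm : R) (k : R) : R :=
  Cp * Rpower Tp k - Cm * Rpower Tm k.

(* Writing T^k = exp (k ln T), the j-th derivative of P is
   C_p a^j e^(a k) - C_m b^j e^(b k) with a = ln T_p < 0 and b = ln T_m < 0.
   Since a^j and b^j share the sign (-1)^j, it vanishes exactly where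
   ln C_p + j ln|a| + a k = ln C_m + j ln|b| + b k: a single point k^(j), affine in j
   with slope (ln|a| - ln|b|) / (b - a), which is positive because ln is increasing. *)

From Stdlib Require Import Reals Lra.
From Coquelicot Require Import Coquelicot.
Open Scope R_scope.

Lemma exp_diff_eq0_iff (c d a b k : R) :
  0 < c -> 0 < d -> a <> b ->
  c * exp (a * k) - d * exp (b * k) = 0 <-> k = (ln c - ln d) / (b - a).
Proof.
  intros hc hd hab.
  rewrite <- (exp_ln c hc), <- (exp_ln d hd), <- !exp_plus, !ln_exp.
  split.
  - intro H.
    assert (Hexp : ln c + a * k = ln d + b * k) by (apply exp_inv; lra).
    field_simplify_eq; lra.
  - intros ->. replace (ln c + a * ((ln c - ln d) / (b - a)))
      with (ln d + b * ((ln c - ln d) / (b - a))) by (field; lra).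
    ring.
Qed.

Lemma Derive_n_exp_diff (c d a b : R) (j : nat) (k : R) :
  Derive_n (fun k => c * exp (a * k) - d * exp (b * k)) j k =
  c * a ^ j * exp (a * k) - d * b ^ j * exp (b * k).
Proof.
  revert k; induction j as [|j IH]; intro k; simpl.
  - ring.
  - rewrite (Derive_ext _ _ _ IH).
    apply is_derive_unique. auto_derive; [easy | ring].
Qed.

Lemma Derive_n_Pfun (Cp Cm Tp Tm : R) (j : nat) (k : R) :
  Derive_n (Pfun Cp Cm Tp Tm) j k =
  Cp * ln Tp ^ j * exp (ln Tp * k) - Cm * ln Tm ^ j * exp (ln Tm * k).
Proof.
  rewrite <- Derive_n_exp_diff.
  apply Derive_n_ext; intro t.
  unfold Pfun, Rpower. rewrite (Rmult_comm t (ln Tp)), (Rmult_comm t (ln Tm)).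
  reflexivity.
Qed.

Definition char_point (c d a b : R) (j : nat) : R :=
  (ln c - ln d + INR j * (ln (- a) - ln (- b))) / (b - a).

Lemma exp_diff_derive_eq0_iff (c d a b k : R) (j : nat) :
  0 < c -> 0 < d -> a < 0 -> b < 0 -> a <> b ->
  c * a ^ j * exp (a * k) - d * b ^ j * exp (b * k) = 0 <->
  k = char_point c d a b j.
Proof.
  intros hc hd ha hb hab.
  assert (hcj : 0 < c * (- a) ^ j) by (apply Rmult_lt_0_compat; [|apply pow_lt]; lra).
  assert (hdj : 0 < d * (- b) ^ j) by (apply Rmult_lt_0_compat; [|apply pow_lt]; lra).
  assert (hsign : (-1) ^ j <> 0) by (apply pow_nonzero; lra).
  assert (Hfactor : c * a ^ j * exp (a * k) - d * b ^ j * exp (b * k) =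
    (-1) ^ j * (c * (- a) ^ j * exp (a * k) - d * (- b) ^ j * exp (b * k))).
  { replace a with (-1 * - a) at 1 by ring. replace b with (-1 * - b) at 1 by ring.
    rewrite !Rpow_mult_distr. ring. }
  assert (Hln : (ln (c * (- a) ^ j) - ln (d * (- b) ^ j)) / (b - a) =
                char_point c d a b j).
  { unfold char_point. rewrite !ln_mult, !ln_pow by (try apply pow_lt; lra). f_equal; ring. }
  rewrite Hfactor, <- Hln, <- exp_diff_eq0_iff by assumption.
  split; intro H.
  - destruct (Rmult_integral _ _ H); [contradiction | assumption].
  - rewrite H. ring.
Qed.

Lemma char_point_S (c d a b : R) (j : nat) :
  a < 0 -> b < 0 -> a <> b -> char_point c d a b j < char_point c d a b (S j).
Proof.
  intros ha hb hab. unfold char_point. rewrite S_INR.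
  destruct (Rlt_or_le a b) as [Hlt | Hle].
  - assert (ln (- b) < ln (- a)) by (apply ln_increasing; lra).
    apply Rmult_lt_compat_r; [apply Rinv_0_lt_compat |]; lra.
  - assert (ln (- a) < ln (- b)) by (apply ln_increasing; lra).
    unfold Rdiv. rewrite !(Rmult_comm _ (/ (b - a))).
    apply Rmult_lt_gt_compat_neg_l; [apply Rinv_lt_0_compat |]; lra.
Qed.

Lemma ln_lt_0 (x : R) : 0 < x < 1 -> ln x < 0.
Proof. intro hx. rewrite <- ln_1. apply ln_increasing; lra. Qed.

Theorem corollary3 (Cp Cm Tp Tm : R)
  (hCp : 0 < Cp) (hCm : 0 < Cm)
  (hTp : 0 < Tp < 1) (hTm : 0 < Tm < 1) (hneq : Tp <> Tm) :
  exists kpt : nat -> R,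
    (forall (j : nat) (k : R),
        Derive_n (Pfun Cp Cm Tp Tm) j k = 0 <-> k = kpt j) /\
    (forall j : nat, kpt j < kpt (S j)).
Proof.
  assert (ha : ln Tp < 0) by (apply ln_lt_0; exact hTp).
  assert (hb : ln Tm < 0) by (apply ln_lt_0; exact hTm).
  assert (hab : ln Tp <> ln Tm) by (intro E; apply hneq, ln_inv; lra).
  exists (char_point Cp Cm (ln Tp) (ln Tm)). split.
  - intros j k. rewrite Derive_n_Pfun. apply exp_diff_derive_eq0_iff; assumption.
  - intro j. apply char_point_S; assumption.
Qed.
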